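(* Let $T:X\rightrightarrows X^*$ be a multivalued operator. If $\operatorname{co}(\mathrm{dom}(T))\subset\mathrm{dom}(T^\rho)$, then $T$ is pseudomonotone. In particular, if $\mathrm{dom}(T^\rho)=X$, then $T$ is pseudomonotone.
   Context: $X$ is a real Banach space with dual $X^*$ and pairing $\langle x,x^*\rangle=x^*(x)$. A multivalued operator $T:X\rightrightarrows X^*$ is identified with its graph $T\subset X\times X^*$; $\mathrm{dom}(T)=\{x: \exists x^*,\ (x,x^* )\in T\}$; $\operatorname{co}$ denotes the convex hull. For $(x,x^* ),(y,y^* )\in X\times X^*$, write $(x,x^* )\sim_p(y,y^* )$ if either $\min\{\langle x-y,y^*\rangle,\langle y-x,x^*\rangle\}<0$ or $\langle x-y,y^*\rangle=\langle y-x,x^*\rangle=0$. The pseudomonotone polar of $T$ is $T^\rho=\{(x,x^* )\in X\times X^*: (x,x^* )\sim_p(y,y^* )\ \forall (y,y^* )\in T\}$. $T$ is pseudomonotone if for all $(x,x^* ),(y,y^* )\in T$, $\langle y-x,x^*\rangle\ge0$ implies $\langle y-x,y^*\rangle\ge0$. *)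

From Stdlib Require Import Reals List.
Open Scope R_scope.

Record RBanach := {
  carrier :> Type;
  vadd : carrier -> carrier -> carrier;
  vzero : carrier;
  vopp : carrier -> carrier;
  vscal : R -> carrier -> carrier;
  vnorm : carrier -> R;
  vadd_comm : forall x y, vadd x y = vadd y x;
  vadd_assoc : forall x y z, vadd x (vadd y z) = vadd (vadd x y) z;
  vadd_0 : forall x, vadd x vzero = x;
  vadd_opp : forall x, vadd x (vopp x) = vzero;
  vscal_1 : forall x, vscal 1 x = x;
  vscal_assoc : forall a b x, vscal a (vscal b x) = vscal (a * b) x;
  vscal_distr_v : forall a x y, vscal a (vadd x y) = vadd (vscal a x) (vscal a y);
  vscal_distr_r : forall a b x, vscal (a + b) x = vadd (vscal a x) (vscal b x);
  vnorm_nonneg : forall x, 0 <= vnorm x;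
  vnorm_eq0 : forall x, vnorm x = 0 -> x = vzero;
  vnorm_scal : forall a x, vnorm (vscal a x) = Rabs a * vnorm x;
  vnorm_triangle : forall x y, vnorm (vadd x y) <= vnorm x + vnorm y;
  vcomplete : forall u : nat -> carrier,
    (forall eps, eps > 0 -> exists N, forall m n, (m >= N)%nat -> (n >= N)%nat ->
        vnorm (vadd (u m) (vopp (u n))) < eps) ->
    exists l, forall eps, eps > 0 -> exists N, forall n, (n >= N)%nat ->
        vnorm (vadd (u n) (vopp l)) < eps
}.

Arguments vadd {_}. Arguments vzero {_}. Arguments vopp {_}.
Arguments vscal {_}. Arguments vnorm {_}.

Definition vsub {X : RBanach} (x y : X) : X := vadd x (vopp y).

Record dual (X : RBanach) := {
  dfun :> X -> R;
  dfun_add : forall x y, dfun (vadd x y) = dfun x + dfun y;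
  dfun_scal : forall a x, dfun (vscal a x) = a * dfun x;
  dfun_bounded : exists C, forall x, Rabs (dfun x) <= C * vnorm x
}.

Definition pairing {X : RBanach} (x : X) (xs : dual X) : R := xs x.

(* multivalued operators T : X ==> X^*, identified with their graphs *)
Definition operator (X : RBanach) := X -> dual X -> Prop.

Definition dom {X : RBanach} (T : operator X) : X -> Prop :=
  fun x => exists xs, T x xs.

Fixpoint lincomb {X : RBanach} (l : list (R * X)) : X :=
  match l with
  | nil => vzero
  | (a, x) :: l' => vadd (vscal a x) (lincomb l')
  end.

Definition co {X : RBanach} (A : X -> Prop) : X -> Prop :=
  fun z => exists l : list (R * X),
    (forall p, In p l -> 0 <= fst p /\ A (snd p)) /\
    fold_right Rplus 0 (map fst l) = 1 /\
    z = lincomb l.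

Definition sim_p {X : RBanach} (x : X) (xs : dual X) (y : X) (ys : dual X) : Prop :=
  Rmin (pairing (vsub x y) ys) (pairing (vsub y x) xs) < 0 \/
  (pairing (vsub x y) ys = 0 /\ pairing (vsub y x) xs = 0).

Definition ps_polar {X : RBanach} (T : operator X) : operator X :=
  fun x xs => forall y ys, T y ys -> sim_p x xs y ys.

Definition pseudomonotone {X : RBanach} (T : operator X) : Prop :=
  forall x xs y ys, T x xs -> T y ys ->
    pairing (vsub y x) xs >= 0 -> pairing (vsub y x) ys >= 0.

(* Suppose (x, x^* ) and (y, y^* ) lie in T with <y-x, x^* > >= 0 > <y-x, y^* >,
   and take z^* in T^rho(z) at the midpoint z of x and y.  The relation
   (z, z^* ) ~_p (x, x^* ) forces <x-z, z^* > <= 0, and (z, z^* ) ~_p (y, y^* )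
   forces <y-z, z^* > < 0; but these two numbers are opposite since z is the
   midpoint, a contradiction. *)
From Stdlib Require Import Reals List Lra.
Open Scope R_scope.

Section DualFacts.

Variable X : RBanach.

Lemma dual_vzero (f : dual X) : f vzero = 0.
Proof.
  pose proof (dfun_add X f vzero vzero) as H.
  rewrite vadd_0 in H; lra.
Qed.

Lemma pairing_vsub (x y : X) (f : dual X) : pairing (vsub x y) f = f x - f y.
Proof.
  unfold pairing, vsub; rewrite dfun_add.
  pose proof (dfun_add X f y (vopp y)) as H.
  rewrite vadd_opp, dual_vzero in H; lra.
Qed.

Definition midpoint (x y : X) : X := lincomb ((1/2, x) :: (1/2, y) :: nil).

Lemma dual_midpoint (f : dual X) (x y : X) : f (midpoint x y) = (f x + f y) / 2.
Proof.
  unfold midpoint; simpl.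
  rewrite !dfun_add, !dfun_scal, dual_vzero; lra.
Qed.

Lemma co_midpoint (A : X -> Prop) (x y : X) : A x -> A y -> co A (midpoint x y).
Proof.
  intros Ax Ay; exists ((1/2, x) :: (1/2, y) :: nil); split; [| split].
  - intros p [<- | [<- | []]]; simpl; split; (lra || assumption).
  - simpl; lra.
  - reflexivity.
Qed.

End DualFacts.

Section SimP.

Variables (X : RBanach) (z y : X) (zs ys : dual X).
Hypothesis Hsim : sim_p z zs y ys.

Lemma sim_p_nonpos_of_nonneg :
  pairing (vsub z y) ys >= 0 -> pairing (vsub y z) zs <= 0.
Proof.
  intros Hge; destruct Hsim as [Hmin | [_ Heq]]; [| lra].
  revert Hmin; unfold Rmin; destruct (Rle_dec _ _); lra.
Qed.

Lemma sim_p_neg_of_pos :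
  pairing (vsub z y) ys > 0 -> pairing (vsub y z) zs < 0.
Proof.
  intros Hgt; destruct Hsim as [Hmin | [Heq _]]; [| lra].
  revert Hmin; unfold Rmin; destruct (Rle_dec _ _); lra.
Qed.

End SimP.

Lemma pseudomonotone_of_co_dom_polar (X : RBanach) (T : operator X) :
  (forall z, co (dom T) z -> dom (ps_polar T) z) -> pseudomonotone T.
Proof.
  intros Hco x xs y ys Txs Tys Hx.
  destruct (Rge_dec (pairing (vsub y x) ys) 0) as [| Hy]; [assumption | exfalso].
  set (z := midpoint X x y).
  destruct (Hco z (co_midpoint X (dom T) x y (ex_intro _ xs Txs) (ex_intro _ ys Tys)))
    as [zs Hzs].
  pose proof sim_p_nonpos_of_nonneg X z x zs xs (Hzs x xs Txs) as Hxz.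
  pose proof sim_p_neg_of_pos X z y zs ys (Hzs y ys Tys) as Hyz.
  revert Hx Hy Hxz Hyz; unfold z; rewrite !pairing_vsub, !dual_midpoint; lra.
Qed.

Theorem mainTheorem8 (X : RBanach) (T : operator X) :
  ((forall z, co (dom T) z -> dom (ps_polar T) z) -> pseudomonotone T) /\
  ((forall z : X, dom (ps_polar T) z) -> pseudomonotone T).
Proof.
  split.
  - apply pseudomonotone_of_co_dom_polar.
  - intros Hdom; apply pseudomonotone_of_co_dom_polar; intros z _; apply Hdom.
Qed.
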